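(* Let $R$ be a Noetherian ring and let $\mathfrak p$ be a prime ideal of $R$ with $|R/\mathfrak p|_r=|R|_r$. Let $M$ be a finitely generated critical right $R$-module with $|M|_r=|R|_r$ and $\operatorname{Ass}(M)=\{\mathfrak p\}$, and let $I=r(M)$ be its right annihilator. Then: (i) $I\subseteq\mathfrak p$; (ii) $R/I$ is a right Krull homogeneous ring with $|R/I|_r=|R|_r$; (iii) $R/I$ is a $\mathfrak p/I$-primary ring (as a right module over itself its only associated prime is $\mathfrak p/I$), $\mathfrak p/I$ is a non-essential right ideal of $R/I$, and $R/I$ satisfies the right large condition; (iv) either $I=\mathfrak p$, or there exists an ideal $J\neq\mathfrak p$ of $R$ with $I\subsetneq J$, $J\mathfrak p\subseteq I$ and $|R/J|_r<|R|_r$.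
   Context: Rings are associative with identity; ''Noetherian'' means left and right Noetherian. $|M|_r$ denotes the Krull dimension of a right $R$-module $M$. A right module $M$ is critical if $|M/M'|_r<|M|_r$ for every nonzero submodule $M'$ of $M$. $\operatorname{Ass}(M)$ is the set of prime ideals associated to $M$ (primes $\mathfrak q$ equal to the annihilator of some nonzero submodule $M'$ with $\mathfrak q$ the annihilator of every nonzero submodule of $M'$). A ring $S$ is right Krull homogeneous if every nonzero right ideal $K$ of $S$ has $|K|_r=|S|_r$. A Noetherian ring $S$ satisfies the right large condition if $|S/J|_r<|S|_r$ for every essential right ideal $J$ of $S$. *)

(* Right R-modules over a (not necessarily commutative) ring R
   are left modules over the converse ring R^c. *)
From HB Require Import structures.
From mathcomp Require Import all_boot all_order all_algebra.
Set Implicit Arguments.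
Unset Strict Implicit.
Unset Printing Implicit Defensive.
Import GRing.Theory.
Local Open Scope ring_scope.

Definition subS (T : Type) (A B : T -> Prop) := forall x, A x -> B x.
Definition eqS (T : Type) (A B : T -> Prop) := forall x, A x <-> B x.
Definition fullS (T : Type) : T -> Prop := fun _ => True.

(* ---------- ordinals as Brouwer trees (with arbitrary limits) ---------- *)
Inductive ord : Type :=
| OZ : ord
| OS : ord -> ord
| OL : forall J : Type, (J -> ord) -> ord.

(* link the universe of limit indices to (subsets of) ring / module carriers *)
Definition ord_univ_ring (R : nzRingType) : ord := OL (fun _ : R -> Prop => OZ).
Definition ord_univ_mod (R : nzRingType) (M : lmodType R^c) : ord :=
  OL (fun _ : M -> Prop => OZ).

(* ---------- deviation (Krull dimension) of an interval [b, a] in a lattice of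
   subobjects, the subobjects of a type T being given by a predicate Sub ---- *)
Section Deviation.
Variables (T : Type) (Sub : (T -> Prop) -> Prop).

Definition dchain (b a : T -> Prop) (c : nat -> T -> Prop) :=
  forall i, Sub (c i) /\ subS b (c i) /\ subS (c i) a /\ subS (c i.+1) (c i).

(* devlt b a o  <->  dev [b, a] < o, where the trivial interval has
   deviation -1; recursion following Gabriel-Rentschler:
   dev <= o  iff every descending chain has all but finitely many factors of
   deviation < o. *)
Fixpoint devlt (b a : T -> Prop) (o : ord) : Prop :=
  match o with
  | OZ => subS a b
  | OS o' => subS a b \/
      forall c, dchain b a c ->
        exists n, forall i, (n <= i)%N -> devlt (c i.+1) (c i) o'
  | OL J f => subS a b \/ exists i : J, devlt b a (f i)
  end.
End Deviation.

Definition kdim_le (T1 T2 : Type) (S1 : (T1 -> Prop) -> Prop)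
  (b1 a1 : T1 -> Prop) (S2 : (T2 -> Prop) -> Prop) (b2 a2 : T2 -> Prop) :=
  forall o, devlt S2 b2 a2 o -> devlt S1 b1 a1 o.
Definition kdim_lt (T1 T2 : Type) (S1 : (T1 -> Prop) -> Prop)
  (b1 a1 : T1 -> Prop) (S2 : (T2 -> Prop) -> Prop) (b2 a2 : T2 -> Prop) :=
  exists o, devlt S1 b1 a1 o /\ ~ devlt S2 b2 a2 o.
Definition kdim_eq (T1 T2 : Type) (S1 : (T1 -> Prop) -> Prop)
  (b1 a1 : T1 -> Prop) (S2 : (T2 -> Prop) -> Prop) (b2 a2 : T2 -> Prop) :=
  kdim_le S1 b1 a1 S2 b2 a2 /\ kdim_le S2 b2 a2 S1 b1 a1.

Section Ideals.
Variable R : nzRingType.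

Definition zeroS : R -> Prop := fun x => x = 0.

Definition addsubgrp (A : R -> Prop) :=
  A 0 /\ (forall x y, A x -> A y -> A (x - y)).
Definition right_ideal (A : R -> Prop) :=
  addsubgrp A /\ forall x r, A x -> A (x * r).
Definition left_ideal (A : R -> Prop) :=
  addsubgrp A /\ forall x r, A x -> A (r * x).
Definition ideal (A : R -> Prop) := right_ideal A /\ left_ideal A.

Definition prime_ideal (P : R -> Prop) :=
  ideal P /\ ~ P 1 /\
  forall A B, ideal A -> ideal B ->
    (forall a b, A a -> B b -> P (a * b)) -> subS A P \/ subS B P.

Definition noetherian :=
  (forall c : nat -> R -> Prop, (forall i, right_ideal (c i)) ->
     (forall i, subS (c i) (c i.+1)) ->
     exists n, forall m, (n <= m)%N -> subS (c m) (c n)) /\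
  (forall c : nat -> R -> Prop, (forall i, left_ideal (c i)) ->
     (forall i, subS (c i) (c i.+1)) ->
     exists n, forall m, (n <= m)%N -> subS (c m) (c n)).

(* ---------- notions for the factor ring S = R/I, transported to R via the
   correspondence between right ideals of R/I and right ideals of R
   containing I ---------- *)

(* K/I is a nonzero right ideal of R/I *)
Definition nz_right_ideal_over (I K : R -> Prop) :=
  right_ideal K /\ subS I K /\ ~ subS K I.

Definition essential_over (I J : R -> Prop) :=
  right_ideal J /\ subS I J /\
  forall K, nz_right_ideal_over I K -> ~ subS (fun x => K x /\ J x) I.

Definition right_krull_homogeneous_quot (I : R -> Prop) :=
  forall K, nz_right_ideal_over I K ->
    kdim_eq right_ideal I K right_ideal I (@fullS R).

Definition right_large_quot (I : R -> Prop) :=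
  forall J, essential_over I J ->
    kdim_lt right_ideal J (@fullS R) right_ideal I (@fullS R).

(* right annihilator in R/I of the right ideal N/I (of R/I), pulled back to R *)
Definition ann_quot (I N : R -> Prop) : R -> Prop :=
  fun r => forall n, N n -> I (n * r).

(* Q/I is an associated prime of the right (R/I)-module R/I *)
Definition assoc_quot (I Q : R -> Prop) :=
  prime_ideal Q /\ subS I Q /\
  exists N, nz_right_ideal_over I N /\ eqS (ann_quot I N) Q /\
    forall N', nz_right_ideal_over I N' -> subS N' N -> eqS (ann_quot I N') Q.
End Ideals.

Section Modules.
Variables (R : nzRingType) (M : lmodType R^c).

Definition ract (m : M) (r : R) : M := (r : R^c) *: m.

Definition submod (N : M -> Prop) :=
  N 0 /\ (forall x y, N x -> N y -> N (x - y)) /\ (forall x r, N x -> N (ract x r)).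

Definition zeroM : M -> Prop := fun x => x = 0.

Definition nonzero_submod (N : M -> Prop) := submod N /\ exists x, N x /\ x <> 0.

Definition fin_gen :=
  exists n (g : 'I_n -> M), forall m, exists r : 'I_n -> R,
    m = \sum_(i < n) ract (g i) (r i).

Definition critical :=
  forall N, nonzero_submod N ->
    kdim_lt submod N (@fullS M) submod zeroM (@fullS M).

Definition ann (N : M -> Prop) : R -> Prop := fun r => forall m, N m -> ract m r = 0.

Definition assoc_prime (Q : R -> Prop) :=
  prime_ideal Q /\
  exists N, nonzero_submod N /\ eqS (ann N) Q /\
    forall N', nonzero_submod N' -> subS N' N -> eqS (ann N') Q.
End Modules.

(* Write I = ann M.  For x in M and a right ideal K, the cyclic piece xK is
   isomorphic to K/(K ∩ ann x); when it is nonzero, criticality gives it the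
   Krull dimension of M, i.e. of R.  A strictly descending chain of right ideals
   all of whose factors have full dimension cannot exist, and the annihilators
   of longer and longer finite sets of elements would form one: hence
   I = ann x_1 ∩ ... ∩ ann x_n, and R/I embeds in M^n.  Consequently every
   nonzero right ideal of R/I contains a nonzero piece isomorphic to a
   submodule of M, which gives homogeneity and Ass(R/I) ⊆ Ass(M) = {p}.
   For the large condition, let J/I be essential in V/I and pick x = x_i with
   xJ ≠ 0.  Then V/(J + ann_V x) ≅ xV/xJ lies in M/xJ, of smaller dimension
   than M, while (J + ann_V x)/J ≅ ann_V x/(J ∩ ann_V x) is handled by
   induction on n.  Finally {r | r p ⊆ I} is essential over I, since every
   nonzero right ideal of R/I contains one annihilated by p; this is the ideal
   of (iv). *)

From mathcomp Require Import all_boot all_order all_algebra.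
From Stdlib Require Import Classical ClassicalEpsilon FunctionalExtensionality PropExtensionality.
Set Implicit Arguments.
Unset Strict Implicit.
Unset Printing Implicit Defensive.
Import GRing.Theory.
Local Open Scope ring_scope.

Fixpoint ord_le (x y : ord) {struct x} : Prop :=
  match x with
  | OZ => True
  (* the inner fixpoint is [ord_lt x' y], inlined for the guard condition *)
  | OS x' => (fix lt_x' (y : ord) : Prop :=
               match y with
               | OZ => False
               | OS y' => ord_le x' y'
               | OL _ g => exists j, lt_x' (g j)
               end) y
  | OL _ f => forall i, ord_le (f i) y
  end.

Fixpoint ord_lt (x y : ord) {struct y} : Prop :=
  match y with
  | OZ => False
  | OS y' => ord_le x y'
  | OL _ g => exists j, ord_lt x (g j)
  end.

Lemma ord_le_S x y : ord_le (OS x) y <-> ord_lt x y.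
Proof.
elim: y => [|y _|J g IH] //=.
by split=> -[j Hj]; exists j; apply/IH.
Qed.

Lemma ord_lt_OL_or_ge J (g : J -> ord) x :
  (forall j, ord_lt x (g j) \/ ord_le (g j) x) -> ord_lt x (OL g) \/ ord_le (OL g) x.
Proof.
move=> Hg; case: (classic (exists j, ord_lt x (g j))) => [|Hn]; [by left|right] => j.
by case: (Hg j) => // Hlt; case: Hn; exists j.
Qed.

Lemma ord_total x y : (ord_le x y \/ ord_lt y x) /\ (ord_lt x y \/ ord_le y x).
Proof.
elim: x y => [|x IHx|J f IHf] y.
- split; first by left.
  elim: y => [|y _|K g IHg]; [by right|by left|].
  by apply: ord_lt_OL_or_ge => j; case: (IHg j).
- split; first by case: (IHx y) => _ [?|?]; [left; apply/ord_le_S|right].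
  elim: y => [|y _|K g IHg]; first by right.
    by case: (IHx y) => _ [?|?]; [left; apply/ord_le_S|right; apply/ord_le_S].
  by apply: ord_lt_OL_or_ge => j; case: (IHg j).
- have Hf z : ord_le (OL f) z \/ ord_lt z (OL f).
    by apply/or_comm/ord_lt_OL_or_ge => i; case: (IHf i z) => -[]; [right|left].
  split; first exact: Hf.
  elim: y => [|y _|K g IHg]; first by right.
    by case: (Hf y) => ?; [left|right; apply/ord_le_S].
  by apply: ord_lt_OL_or_ge => j; case: (IHg j).
Qed.

Lemma subS_refl T (x : T -> Prop) : subS x x.
Proof. by []. Qed.

Lemma not_subS T (x y : T -> Prop) : ~ subS x y -> exists z, x z /\ ~ y z.
Proof.
move=> xy; apply: NNPP => Hn; apply: xy => z xz; apply: NNPP => yz.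
by apply: Hn; exists z.
Qed.

Section Deviation.
Variables (T : Type) (Sub : (T -> Prop) -> Prop).

Lemma devlt_trivial b a o : subS a b -> devlt Sub b a o.
Proof. by case: o => /=; auto. Qed.

Lemma devlt_subinterval o b a b' a' :
  devlt Sub b a o -> subS b b' -> subS a' a -> devlt Sub b' a' o.
Proof.
elim: o b a b' a' => [|o IH|J f IH] b a b' a' /= H Hb Ha.
- by move=> x /Ha /H /Hb.
- case: H => [H|H]; [by left => x /Ha /H /Hb|right => c Hc].
  apply: H => i; have [Sc [Hbc [Hca Hcc]]] := Hc i.
  by split=> //; split; [move=> x /Hb /Hbc|split=> // x /Hca /Ha].
- case: H => [H|[i H]]; [by left => x /Ha /H /Hb|right].
  by exists i; apply: IH H Hb Ha.
Qed.

Lemma devlt_S b a o : devlt Sub b a o -> devlt Sub b a (OS o).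
Proof.
move=> H; right => c Hc; exists 0%N => i _.
have [_ [_ [Hci _]]] := Hc i; have [_ [Hbc _]] := Hc i.+1.
exact: devlt_subinterval H Hbc Hci.
Qed.

Lemma devlt_le x y b a : ord_le x y -> devlt Sub b a x -> devlt Sub b a y.
Proof.
elim: x y b a => [|x IHx|J f IHf] y b a Hxy H.
- exact: devlt_trivial.
- move/ord_le_S: Hxy; elim: y => [|y _|K g IHg] //= Hxy.
    case: H => [H|H]; [by left|right] => c Hc.
    have [n Hn] := H c Hc; exists n => i Hi; exact: IHx _ _ _ Hxy (Hn i Hi).
  by case: Hxy => j Hj; right; exists j; apply: IHg.
- by case: H => [H|[i H]]; [apply: devlt_trivial|apply: IHf _ _ _ (Hxy i) H].
Qed.

Lemma devlt_lt x y b a : ord_lt x y -> devlt Sub b a x -> devlt Sub b a y.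
Proof. by move=> /ord_le_S Hxy /devlt_S; apply: devlt_le. Qed.

End Deviation.

Definition in_interval T (Sub : (T -> Prop) -> Prop) (lo hi x : T -> Prop) :=
  Sub x /\ subS lo x /\ subS x hi.

Section Embedding.
Variables (T1 T2 : Type) (S1 : (T1 -> Prop) -> Prop) (S2 : (T2 -> Prop) -> Prop).
Variables (phi : (T1 -> Prop) -> T2 -> Prop) (lo hi : T1 -> Prop).
Hypothesis phi_sub : forall x, in_interval S1 lo hi x -> S2 (phi x).
Hypothesis phi_subS : forall x y, in_interval S1 lo hi x -> in_interval S1 lo hi y ->
  subS x y <-> subS (phi x) (phi y).

Lemma dchain_in_interval y x c : in_interval S1 lo hi y -> in_interval S1 lo hi x ->
  dchain S1 y x c -> forall i, in_interval S1 lo hi (c i).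
Proof.
move=> [_ [Hly _]] [_ [_ Hxh]] Hc i; have [Sc [Hyc [Hcx _]]] := Hc i.
by split=> //; split=> z; [move/Hly/Hyc|move/Hcx/Hxh].
Qed.

Lemma devlt_embedding o y x : in_interval S1 lo hi y -> in_interval S1 lo hi x ->
  devlt S2 (phi y) (phi x) o -> devlt S1 y x o.
Proof.
elim: o y x => [|o IH|J f IH] y x Iy Ix /=.
- by move/(phi_subS Ix Iy).
- case=> [H|H]; [by left; apply/(phi_subS Ix Iy)|right => c Hc].
  have Ic := dchain_in_interval Iy Ix Hc.
  have [n Hn] : exists n, forall i, (n <= i)%N -> devlt S2 (phi (c i.+1)) (phi (c i)) o.
    apply: H => i; have [_ [Hyc [Hcx Hcc]]] := Hc i; split; first exact: phi_sub.
    by split; [|split]; apply/phi_subS.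
  by exists n => i /Hn; apply: IH.
- case=> [H|[i H]]; [by left; apply/(phi_subS Ix Iy)|right].
  by exists i; apply: IH.
Qed.

End Embedding.

Definition meetS T (x y : T -> Prop) : T -> Prop := fun z => x z /\ y z.
Definition addS (V : zmodType) (x y : V -> Prop) : V -> Prop :=
  fun z => exists u v, x u /\ y v /\ z = u + v.

Record subgroup_lattice (V : zmodType) (Sub : (V -> Prop) -> Prop) : Prop := {
  sub0 : forall x, Sub x -> x 0;
  subB : forall x a b, Sub x -> x a -> x b -> x (a - b);
  sub_meet : forall x y, Sub x -> Sub y -> Sub (meetS x y);
  sub_add : forall x y, Sub x -> Sub y -> Sub (addS x y) }.

Section SubgroupLattice.
Variables (V : zmodType) (Sub : (V -> Prop) -> Prop).
Hypothesis L : subgroup_lattice Sub.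

Lemma subN x a : Sub x -> x a -> x (- a).
Proof. by move=> Sx xa; rewrite -sub0r; apply: (subB L) => //; apply: (sub0 L). Qed.

Lemma subD x a b : Sub x -> x a -> x b -> x (a + b).
Proof. by move=> Sx xa xb; rewrite -[b]opprK; apply: (subB L) => //; apply: subN. Qed.

Lemma subDr x u v : Sub x -> x u -> x (u + v) -> x v.
Proof. by move=> Sx xu xuv; rewrite -[v](addKr u); apply: subD => //; apply: subN. Qed.

Lemma addS_l x y : Sub y -> subS x (addS x y).
Proof. by move=> Sy z xz; exists z, 0; rewrite addr0; split=> //; split=> //; apply: (sub0 L). Qed.

Lemma addS_r x y : Sub x -> subS y (addS x y).
Proof. by move=> Sx z yz; exists 0, z; rewrite add0r; split=> //; apply: (sub0 L). Qed.

Lemma addS_lub x y z : Sub z -> subS x z -> subS y z -> subS (addS x y) z.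
Proof. by move=> Sz xz yz _ [u [v [/xz zu [/yz zv ->]]]]; apply: subD. Qed.

Lemma addSC (x y : V -> Prop) : subS (addS x y) (addS y x).
Proof. by move=> _ [u [v [xu [yv ->]]]]; exists v, u; rewrite addrC. Qed.

Lemma in_interval_meet x w : Sub x -> Sub w -> in_interval Sub (meetS x w) w w.
Proof. by move=> Sx Sw; split=> //; split=> // z []. Qed.

Lemma in_interval_add x w : Sub x -> Sub w -> in_interval Sub x (addS x w) (addS x w).
Proof. by move=> Sx Sw; split; [apply: (sub_add L)|split=> //; apply: addS_l]. Qed.

Lemma devlt_add_second_iso o x w : Sub x -> Sub w ->
  devlt Sub (meetS x w) w o -> devlt Sub x (addS x w) o.
Proof.
move=> Sx Sw H.
apply: (devlt_embedding (S2 := Sub) (phi := fun K => meetS K w) (lo := x) (hi := addS x w)).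
- by move=> K [SK _]; apply: (sub_meet L).
- move=> K1 K2 [S1 [x1 h1]] [S2 [x2 h2]]; split=> [H12 z [/H12 ? ?] //|H12 z K1z].
  have [u [v [xu [wv Ez]]]] := h1 z K1z.
  have K1v : K1 v by apply: (subDr S1 (x1 _ xu)); rewrite -Ez.
  have [K2v _] := H12 v (conj K1v wv).
  by rewrite Ez; apply: subD => //; apply: x2.
- by split=> //; split=> //; apply: addS_l.
- exact: in_interval_add.
- by apply: devlt_subinterval H _ _ => // z [].
Qed.

Lemma devlt_meet_second_iso o x w : Sub x -> Sub w ->
  devlt Sub x (addS x w) o -> devlt Sub (meetS x w) w o.
Proof.
move=> Sx Sw H.
apply: (devlt_embedding (S2 := Sub) (phi := fun K => addS K x) (lo := meetS x w) (hi := w)).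
- by move=> K [SK _]; apply: (sub_add L).
- move=> K1 K2 [S1 [l1 h1]] [S2 [l2 h2]]; split=> H12.
    by apply: addS_lub => //; [apply: (sub_add L)|move=> z /H12; apply: addS_l|apply: addS_r].
  move=> z K1z; have [u [v [K2u [xv Ez]]]] := H12 z (addS_l Sx K1z).
  have wv : w v by apply: (subDr Sw (h2 _ K2u)); rewrite -Ez; exact: h1 _ K1z.
  by rewrite Ez; apply: subD => //; apply: l2.
- by split; [apply: (sub_meet L)|split=> // z []].
- exact: in_interval_meet.
- by apply: devlt_subinterval H (addS_r (sub_meet L Sx Sw)) (@addSC _ _).
Qed.

Lemma dchain_meet a b c d : Sub b -> subS a b -> dchain Sub a c d ->
  dchain Sub a b (fun i => meetS (d i) b).
Proof.
move=> Sb ab Hd i; have [Sd [ad [_ dd]]] := Hd i.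
split; first exact: (sub_meet L).
by split=> [z az|]; [split; auto|split=> z [dz bz] //; split=> //; apply: dd].
Qed.

Lemma dchain_add a b c d : Sub b -> Sub c -> subS b c -> dchain Sub a c d ->
  dchain Sub b c (fun i => addS (d i) b).
Proof.
move=> Sb Sc bc Hd i; have [Sd [_ [dc dd]]] := Hd i; have [Sd' _] := Hd i.+1.
split; first exact: (sub_add L).
split; first exact: addS_r.
split; first exact: addS_lub.
by apply: addS_lub => //; [apply: (sub_add L)|move=> z /dd; apply: addS_l|apply: addS_r].
Qed.

Lemma devlt_lower_factor o y x b : Sub y -> Sub x -> Sub b -> subS y x ->
  devlt Sub (meetS y b) (meetS x b) o -> devlt Sub y (addS y (meetS x b)) o.
Proof.
move=> Sy Sx Sb yx H; apply: devlt_add_second_iso => //; first exact: (sub_meet L).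
by apply: devlt_subinterval H _ _ => // z [yz bz]; split=> //; split=> //; apply: yx.
Qed.

Lemma devlt_upper_factor o y x b : Sub y -> Sub x -> Sub b -> subS y x ->
  devlt Sub (addS y b) (addS x b) o -> devlt Sub (addS y (meetS x b)) x o.
Proof.
move=> Sy Sx Sb yx H.
have Syb : Sub (addS y b) by apply: (sub_add L).
have ybx : subS (addS (addS y b) x) (addS x b).
  apply: addS_lub; [exact: (sub_add L)| |exact: addS_l].
  by apply: addS_lub => //; [apply: (sub_add L)|move=> z /yx; apply: addS_l|apply: addS_r].
have := devlt_meet_second_iso Syb Sx (devlt_subinterval H (@subS_refl _ _) ybx).
move/devlt_subinterval; apply=> // z [[u [v [yu [bv Ez]]]] xz].
exists u, v; split=> //; split=> //; split=> //.
by apply: (subDr Sx (yx _ yu)); rewrite -Ez.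
Qed.

Lemma devlt_comb o a b c : Sub a -> Sub b -> Sub c -> subS a b -> subS b c ->
  devlt Sub a b o -> devlt Sub b c o -> devlt Sub a c o.
Proof.
elim: o a b c => [|o IH|J f IH] a b c Sa Sb Sc ab bc Hab Hbc.
- by move=> z /Hbc /Hab.
- case: (Hab) => [ba|H1]; first exact: devlt_subinterval Hbc ba (@subS_refl _ c).
  case: (Hbc) => [cb|H2]; first exact: devlt_subinterval Hab (@subS_refl _ a) cb.
  right=> d Hd.
  have [n1 Hn1] := H1 _ (dchain_meet Sb ab Hd).
  have [n2 Hn2] := H2 _ (dchain_add Sb Sc bc Hd).
  exists (maxn n1 n2) => i Hi; have [Sd [_ [_ dd]]] := Hd i; have [Sd' _] := Hd i.+1.
  have Sdb : Sub (meetS (d i) b) by apply: (sub_meet L).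
  apply: (IH _ (addS (d i.+1) (meetS (d i) b))) => //.
  + exact: (sub_add L).
  + exact: addS_l.
  + by apply: addS_lub dd _ => // z [].
  + exact: devlt_lower_factor (Hn1 i (leq_trans (leq_maxl _ _) Hi)).
  + exact: devlt_upper_factor (Hn2 i (leq_trans (leq_maxr _ _) Hi)).
- case: (Hab) => [ba|[i H1]]; first exact: devlt_subinterval Hbc ba (@subS_refl _ c).
  case: (Hbc) => [cb|[j H2]]; first exact: devlt_subinterval Hab (@subS_refl _ a) cb.
  right; case: (ord_total (f i) (f j)).1 => [le|lt].
  + by exists j; apply: (IH j a b) => //; apply: devlt_le le H1.
  + by exists i; apply: (IH i a b) => //; apply: devlt_lt lt H2.
Qed.

Lemma devlt_comb_max o1 o2 a b c : Sub a -> Sub b -> Sub c -> subS a b -> subS b c ->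
  devlt Sub a b o1 -> devlt Sub b c o2 -> devlt Sub a c o1 \/ devlt Sub a c o2.
Proof.
move=> Sa Sb Sc ab bc H1 H2; case: (ord_total o1 o2).1 => [le|lt].
- by right; apply: (devlt_comb _ _ _ ab bc) => //; apply: devlt_le le H1.
- by left; apply: (devlt_comb _ _ _ ab bc) => //; apply: devlt_lt lt H2.
Qed.

Lemma kdim_lt_comb T2 (S2 : (T2 -> Prop) -> Prop) b2 a2 a b c :
  Sub a -> Sub b -> Sub c -> subS a b -> subS b c ->
  kdim_lt Sub a b S2 b2 a2 -> kdim_lt Sub b c S2 b2 a2 -> kdim_lt Sub a c S2 b2 a2.
Proof.
move=> Sa Sb Sc ab bc [o1 [H1 N1]] [o2 [H2 N2]].
by case: (devlt_comb_max Sa Sb Sc ab bc H1 H2) => H; [exists o1|exists o2].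
Qed.

End SubgroupLattice.

Definition ascending_chain_condition T (Sub : (T -> Prop) -> Prop) :=
  forall c : nat -> T -> Prop, (forall i, Sub (c i)) -> (forall i, subS (c i) (c i.+1)) ->
    exists n, forall m, (n <= m)%N -> subS (c m) (c n).

Lemma dchain_small_factor T (Sub : (T -> Prop) -> Prop) b a o c :
  devlt Sub b a o -> ~ subS a b -> dchain Sub b a c ->
  exists k o', devlt Sub (c k.+1) (c k) o' /\ ~ devlt Sub b a o'.
Proof.
move=> H ab Hc; apply: NNPP => Hn.
have full_factor k o' : devlt Sub (c k.+1) (c k) o' -> devlt Sub b a o'.
  by move=> Hk; apply: NNPP => Ho; apply: Hn; exists k, o'.
elim: o H => [|o IH|J f IH] /= H; first exact: ab H.
- case: H => // H; have [n Hn'] := H c Hc.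
  exact: IH (full_factor _ _ (Hn' n (leqnn n))).
- by case: H => [//|[j]]; apply: IH.
Qed.

Section AscendingChainCondition.
Variables (T : Type) (Sub : (T -> Prop) -> Prop).
Hypothesis acc : ascending_chain_condition Sub.

Lemma acc_maximal (P : (T -> Prop) -> Prop) : (forall x, P x -> Sub x) -> (exists x, P x) ->
  exists x, P x /\ forall y, P y -> subS x y -> subS y x.
Proof.
move=> PS [x0 Px0]; apply: NNPP => Hn.
have step x : P x -> {y | P y /\ subS x y /\ ~ subS y x}.
  move=> Px; apply: constructive_indefinite_description; apply: NNPP => Hy.
  apply: Hn; exists x; split=> // y Py xy; apply: NNPP => yx; apply: Hy; exists y.
  by split.
pose next (s : {x | P x}) : {x | P x} :=
  exist _ (sval (step _ (svalP s))) (proj1 (svalP (step _ (svalP s)))).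
pose c n := sval (iter n next (exist _ x0 Px0)).
have [n Hn'] := @acc c (fun i => PS _ (svalP (iter i next _)))
  (fun i => proj1 (proj2 (svalP (step _ (svalP (iter i next _)))))).
exact: (proj2 (proj2 (svalP (step _ (svalP (iter n next _)))))) (Hn' n.+1 (leqnSn n)).
Qed.

Lemma devlt_exists b : Sub b -> exists o, devlt Sub b (@fullS T) o.
Proof.
move=> Sb; apply: NNPP => Hb.
have [m [[Sm Nm] mmax]] := @acc_maximal
  (fun b => Sub b /\ forall o, ~ devlt Sub b (@fullS T) o) (fun x H => proj1 H)
  (ex_intro _ b (conj Sb (fun o H => Hb (ex_intro _ o H)))).
pose above := {b' | Sub b' /\ subS m b' /\ ~ subS b' m}.
have dev_above (j : above) : {o | devlt Sub (sval j) (@fullS T) o}.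
  apply: constructive_indefinite_description; case: j => b' [Sb' [mb' b'm]] /=.
  apply: NNPP => Hn; apply/b'm/(mmax b') => //.
  by split=> // o Ho; apply: Hn; exists o.
apply: (Nm (OS (OL (fun j => sval (dev_above j))))); right=> c Hc.
have Hmon j i : (j <= i)%N -> subS (c i) (c j).
  move/subnKC <-; elim: (i - j)%N => [|k IH]; first by rewrite addn0.
  by rewrite addnS => z /(proj2 (proj2 (proj2 (Hc _)))) /IH.
case: (classic (exists j, subS (c j) m)) => [[j cm]|Hnj].
  exists j => i ji; left=> z /(Hmon _ _ ji) /cm; apply: (proj1 (proj2 (Hc i.+1))).
exists 0%N => i _; right.
have [Sc [mc _]] := Hc i.+1.
have cm : ~ subS (c i.+1) m by move=> cm; apply: Hnj; exists i.+1.
exists (exist _ (c i.+1) (conj Sc (conj mc cm))).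
by apply: devlt_subinterval (svalP (dev_above _)) _ _.
Qed.

End AscendingChainCondition.

Section RightIdeals.
Variable R : nzRingType.
Implicit Types A B : R -> Prop.

Lemma right_ideal0 A : right_ideal A -> A 0.
Proof. by case=> -[]. Qed.

Lemma right_idealB A a b : right_ideal A -> A a -> A b -> A (a - b).
Proof. by case=> -[_ HB] _; apply: HB. Qed.

Lemma right_idealM A a r : right_ideal A -> A a -> A (a * r).
Proof. by case=> _ HM; apply: HM. Qed.

Lemma right_ideal_meet A B : right_ideal A -> right_ideal B -> right_ideal (meetS A B).
Proof.
move=> HA HB; split; first split.
- by split; apply: right_ideal0.
- by move=> a b [? ?] [? ?]; split; apply: right_idealB.
- by move=> a r [? ?]; split; apply: right_idealM.
Qed.

Lemma right_ideal_add A B : right_ideal A -> right_ideal B -> right_ideal (addS A B).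
Proof.
move=> HA HB; split; first split.
- by exists 0, 0; split; [apply: right_ideal0 HA|split; [apply: right_ideal0 HB|rewrite addr0]].
- move=> _ _ [u [v [Au [Bv ->]]]] [u' [v' [Au' [Bv' ->]]]].
  exists (u - u'), (v - v'); rewrite opprD addrACA.
  by split; [apply: right_idealB Au Au'|split; [apply: right_idealB Bv Bv'|]].
- move=> _ r [u [v [Au [Bv ->]]]].
  exists (u * r), (v * r); rewrite mulrDl.
  by split; [apply: right_idealM|split; [apply: right_idealM|]].
Qed.

Lemma right_ideal_lattice : subgroup_lattice (@right_ideal R).
Proof.
split; [exact: right_ideal0|exact: right_idealB|exact: right_ideal_meet|exact: right_ideal_add].
Qed.

Lemma right_ideal_zero : right_ideal (@zeroS R).
Proof.
by split; [split=> [|_ _ -> ->]|move=> _ r ->]; rewrite /zeroS ?subr0 ?mul0r.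
Qed.

Lemma right_ideal_full : right_ideal (@fullS R).
Proof. by []. Qed.

End RightIdeals.

Section Submodules.
Variables (R : nzRingType) (M : lmodType R^c).
Implicit Types (A B : M -> Prop) (m : M) (r : R).

Lemma ractA m r s : ract (ract m r) s = ract m (r * s).
Proof. exact: scalerA. Qed.

Lemma ract0 m : ract m 0 = 0.
Proof. exact: scale0r. Qed.

Lemma ract0m r : ract (0 : M) r = 0.
Proof. exact: scaler0. Qed.

Lemma ractBr m r s : ract m (r - s) = ract m r - ract m s.
Proof. exact: scalerBl. Qed.

Lemma ractDl m m' r : ract (m + m') r = ract m r + ract m' r.
Proof. exact: scalerDr. Qed.

Lemma submod0 A : submod A -> A 0.
Proof. by case. Qed.

Lemma submodB A a b : submod A -> A a -> A b -> A (a - b).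
Proof. by case=> _ [HB _]; apply: HB. Qed.

Lemma submodM A a r : submod A -> A a -> A (ract a r).
Proof. by case=> _ [_ HM]; apply: HM. Qed.

Lemma submod_meet A B : submod A -> submod B -> submod (meetS A B).
Proof.
move=> HA HB; split; [|split].
- by split; apply: submod0.
- by move=> a b [? ?] [? ?]; split; apply: submodB.
- by move=> a r [? ?]; split; apply: submodM.
Qed.

Lemma submod_add A B : submod A -> submod B -> submod (addS A B).
Proof.
move=> HA HB; split; [|split].
- by exists 0, 0; split; [apply: submod0 HA|split; [apply: submod0 HB|rewrite addr0]].
- move=> _ _ [u [v [Au [Bv ->]]]] [u' [v' [Au' [Bv' ->]]]].
  exists (u - u'), (v - v'); rewrite opprD addrACA.
  by split; [apply: submodB Au Au'|split; [apply: submodB Bv Bv'|]].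
- move=> _ r [u [v [Au [Bv ->]]]].
  exists (ract u r), (ract v r); rewrite ractDl.
  by split; [apply: submodM|split; [apply: submodM|]].
Qed.

Lemma submod_lattice : subgroup_lattice (@submod R M).
Proof. split; [exact: submod0|exact: submodB|exact: submod_meet|exact: submod_add]. Qed.

Lemma submod_zero : submod (@zeroM R M).
Proof. by split; [|split=> [_ _ -> ->|_ r ->]]; rewrite /zeroM ?subr0 ?ract0m. Qed.

Lemma submod_full : submod (@fullS M).
Proof. by []. Qed.

End Submodules.

Section Annihilators.
Variables (R : nzRingType) (M : lmodType R^c).
Implicit Types (x : M) (xs : seq M) (L : M -> Prop) (K E V N : R -> Prop).

Definition ann_elt x : R -> Prop := fun r => ract x r = 0.
Definition ann_seq xs : R -> Prop := fun r => forall x, x \in xs -> ract x r = 0.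
Definition ract_image x K : M -> Prop := fun m => exists k, K k /\ m = ract x k.
Definition ract_preimage x K L : R -> Prop := fun k => K k /\ L (ract x k).

Lemma right_ideal_ann_elt x : right_ideal (ann_elt x).
Proof.
split; first split.
- exact: ract0.
- by move=> a b xa xb; rewrite /ann_elt ractBr xa xb subr0.
- by move=> a r xa; rewrite /ann_elt -ractA xa ract0m.
Qed.

Lemma ann_seq_cons x xs r : ann_seq (x :: xs) r <-> ract x r = 0 /\ ann_seq xs r.
Proof.
split=> [H|[xr H] y]; first by split=> [|y xsy]; apply: H; rewrite inE ?xsy ?eqxx ?orbT.
by rewrite inE => /predU1P [->|/H].
Qed.

Lemma ann_seq_rem x xs r : x \in xs ->
  ann_seq xs r <-> ract x r = 0 /\ ann_seq (rem x xs) r.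
Proof.
move=> xsx; rewrite -ann_seq_cons.
have xs_eq := perm_mem (perm_to_rem xsx).
by split=> H y; [rewrite -xs_eq|rewrite xs_eq]; apply: H.
Qed.

Lemma right_ideal_ann_seq xs : right_ideal (ann_seq xs).
Proof.
split; first split.
- by move=> x _; rewrite ract0.
- by move=> a b xsa xsb x xsx; rewrite ractBr xsa ?xsb ?subr0.
- by move=> a r xsa x xsx; rewrite -ractA xsa ?ract0m.
Qed.

Lemma ann_sub_ann_seq xs : subS (ann (@fullS M)) (ann_seq xs).
Proof. by move=> r Mr x _; apply: Mr. Qed.

Lemma ann_ideal L : submod L -> ideal (ann L).
Proof.
move=> SL; split; split; first split.
- by move=> m _; rewrite ract0.
- by move=> a b La Lb m Lm; rewrite ractBr La ?Lb ?subr0.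
- by move=> a r La m Lm; rewrite -ractA La ?ract0m.
- by split=> [m _|a b La Lb m Lm]; rewrite ?ract0 ?ractBr ?La ?Lb ?subr0.
- by move=> a r La m Lm; rewrite -ractA La //; apply: submodM.
Qed.

Lemma submod_ract_image x K : right_ideal K -> submod (ract_image x K).
Proof.
move=> RK; split; [|split].
- by exists 0; rewrite ract0; split=> //; apply: right_ideal0.
- move=> _ _ [k [Kk ->]] [k' [Kk' ->]].
  by exists (k - k'); rewrite ractBr; split=> //; apply: right_idealB.
- move=> _ r [k [Kk ->]].
  by exists (k * r); rewrite ractA; split=> //; apply: right_idealM.
Qed.

Lemma right_ideal_ract_preimage x K L : right_ideal K -> submod L ->
  right_ideal (ract_preimage x K L).
Proof.
move=> RK SL; split; first split.
- by split; [apply: right_ideal0|rewrite ract0; apply: submod0].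
- by move=> a b [? ?] [? ?]; split; [apply: right_idealB|rewrite ractBr; apply: submodB].
- by move=> a r [? ?]; split; [apply: right_idealM|rewrite -ractA; apply: submodM].
Qed.

Lemma devlt_ract_image x K o : right_ideal K ->
  devlt (@right_ideal R) (meetS K (ann_elt x)) K o ->
  devlt (@submod R M) (@zeroM R M) (ract_image x K) o.
Proof.
move=> RK H.
have Sx := submod_ract_image x RK.
apply: (devlt_embedding (S2 := @right_ideal R) (phi := ract_preimage x K)
          (lo := @zeroM R M) (hi := ract_image x K)).
- by move=> L [SL _]; apply: right_ideal_ract_preimage.
- move=> L1 L2 [_ [_ h1]] _; split=> [L12 r [Kr L1r]|L12 z L1z].
    by split=> //; apply: L12.
  have [k [Kk Ez]] := h1 z L1z.
  suff [_ L2k] : K k /\ L2 (ract x k) by rewrite Ez.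
  by apply: L12; split=> //; rewrite -Ez.
- by split; [apply: submod_zero|split=> // _ ->; apply: submod0 Sx].
- by split=> //; split=> // _ ->; apply: submod0 Sx.
- by apply: devlt_subinterval H _ _ => // r [].
Qed.

Lemma devlt_ract_image_quotient x E V o :
  right_ideal E -> right_ideal V -> subS E V ->
  devlt (@submod R M) (ract_image x E) (ract_image x V) o ->
  devlt (@right_ideal R) (addS E (meetS V (ann_elt x))) V o.
Proof.
move=> RE RV EV H.
have RL := right_ideal_lattice R.
have RW : right_ideal (meetS V (ann_elt x)).
  by apply: right_ideal_meet => //; apply: right_ideal_ann_elt.
apply: (devlt_embedding (S2 := @submod R M) (phi := ract_image x)
          (lo := addS E (meetS V (ann_elt x))) (hi := V)).
- by move=> K [RK _]; apply: submod_ract_image.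
- move=> K1 K2 [R1 [l1 h1]] [R2 [l2 h2]].
  split=> [K12 _ [k [K1k ->]]|K12 k K1k]; first by exists k; split=> //; apply: K12.
  have [k' [K2k' Ek]] := K12 _ (ex_intro _ k (conj K1k erefl)).
  have W_kk' : meetS V (ann_elt x) (k - k').
    by split; [apply: right_idealB; auto|rewrite /ann_elt ractBr Ek subrr].
  by rewrite -(subrK k' k); apply: (subD RL R2 _ K2k'); apply: l2; apply: (addS_r RL RE).
- have EWV : subS (addS E (meetS V (ann_elt x))) V by apply: (addS_lub RL RV EV) => z [].
  by split; [apply: right_ideal_add|split].
- by split=> //; split=> //; apply: (addS_lub RL RV EV) => z [].
- apply: devlt_subinterval H _ _ => // _ [k [Ek ->]].
  by exists k; split=> //; apply: (addS_l RL).
Qed.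

Lemma devlt_critical L o : critical M -> nonzero_submod L ->
  devlt (@submod R M) (@zeroM R M) L o ->
  devlt (@submod R M) (@zeroM R M) (@fullS M) o.
Proof.
move=> crit LL H; have [oc [Hc Nc]] := crit L LL.
have [SL _] := LL.
have zN : subS (@zeroM R M) L by move=> _ ->; apply: submod0.
by case: (devlt_comb_max (submod_lattice M) (submod_zero M) SL (submod_full M) zN
  (fun _ _ => I) H Hc).
Qed.

Lemma exists_faithful_subideal A K xs : right_ideal K -> subS A K -> ~ subS K A ->
  subS A (ann_seq xs) -> subS (meetS K (ann_seq xs)) A ->
  exists K' x, x \in xs /\
    [/\ right_ideal K', subS A K', subS K' K, ~ subS K' A & subS (meetS K' (ann_elt x)) A].
Proof.
elim: xs K => [|x xs IH] K RK AK KA Axs KxsA.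
  by case: KA => r Kr; apply: KxsA.
case: (classic (subS (meetS K (ann_elt x)) A)) => KxA.
  by exists K, x; split; [exact: mem_head|split].
have RKx : right_ideal (meetS K (ann_elt x)).
  by apply: right_ideal_meet => //; apply: right_ideal_ann_elt.
have [K' [y [xsy [RK' AK' K'K K'A K'yA]]]] := IH _ RKx
  (fun r Ar => conj (AK r Ar) (proj1 ((ann_seq_cons x xs r).1 (Axs r Ar))))
  KxA (fun r Ar => proj2 ((ann_seq_cons x xs r).1 (Axs r Ar)))
  (fun r '(conj (conj Kr xr) xsr) => KxsA r (conj Kr ((ann_seq_cons x xs r).2 (conj xr xsr)))).
by exists K', y; rewrite inE xsy orbT; split=> //; split=> // r /K'K [].
Qed.

Lemma ann_eq_ann_quot_preimage I x K L :
  right_ideal K -> subS I (ann_elt x) -> subS (meetS K (ann_elt x)) I ->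
  subS L (ract_image x K) -> eqS (ann L) (ann_quot I (ract_preimage x K L)).
Proof.
move=> RK Ix KxI LK r.
split=> [Lr k [Kk Lk]|Hr _ /[dup] /LK [k [Kk ->]] Lk].
  by apply: KxI; split; [apply: right_idealM|rewrite /ann_elt -ractA; apply: Lr].
by rewrite ractA; apply/Ix/Hr.
Qed.

Lemma assoc_prime_of_ann_quot xs N q : eqS (ann (@fullS M)) (ann_seq xs) ->
  nz_right_ideal_over (ann (@fullS M)) N -> prime_ideal q ->
  (forall N', nz_right_ideal_over (ann (@fullS M)) N' -> subS N' N ->
     eqS (ann_quot (ann (@fullS M)) N') q) ->
  assoc_prime M q.
Proof.
set I := ann (@fullS M) => I_xs [RN [IN NI]] prime_q annN.
have [K [x [xsx [RK IK KN KI KxI]]]] := exists_faithful_subideal RN IN NI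
  (fun r => (I_xs r).1) (fun r '(conj _ xsr) => (I_xs r).2 xsr).
have Ix : subS I (ann_elt x) by move=> r Ir; apply: (I_xs r).1.
have ann_image L : nonzero_submod L -> subS L (ract_image x K) -> eqS (ann L) q.
  move=> [SL [m [Lm m0]]] LK r.
  apply: iff_trans (ann_eq_ann_quot_preimage RK Ix KxI LK r) (annN _ _ _ r).
    split; first exact: right_ideal_ract_preimage.
    split=> [k Ik|Hsub]; first by split; [apply: IK|rewrite Ix //; apply: submod0].
    have [k [Kk Em]] := LK m Lm; apply: m0; rewrite Em; apply/Ix/Hsub.
    by split; rewrite -?Em.
  by move=> k [/KN].
have [k [Kk kI]] := not_subS KI.
have Nz : nonzero_submod (ract_image x K).
  split; first exact: submod_ract_image.
  by exists (ract x k); split; [exists k|move=> xk0; apply/kI/KxI].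
split=> //; exists (ract_image x K); split=> //; split; last exact: ann_image.
exact: ann_image.
Qed.

End Annihilators.

Definition essential_in (R : nzRingType) (A V E : R -> Prop) :=
  forall K, right_ideal K -> subS A K -> subS K V -> ~ subS K A -> ~ subS (meetS K E) A.

Section CriticalModule.
Variables (R : nzRingType) (M : lmodType R^c).
Hypothesis M_critical : critical M.

Local Notation kdim_lt_M b a :=
  (kdim_lt (@right_ideal R) b a (@submod R M) (@zeroM R M) (@fullS M)).

Lemma ann_eq_ann_seq : ascending_chain_condition (@right_ideal R) ->
  kdim_le (@right_ideal R) (@zeroS R) (@fullS R) (@submod R M) (@zeroM R M) (@fullS M) ->
  exists xs : seq M, eqS (ann (@fullS M)) (ann_seq xs).
Proof.
move=> R_acc dim_R_le_M; apply: NNPP => Hn.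
have next (xs : seq M) : {m : M | exists r, ann_seq xs r /\ ract m r <> 0}.
  apply: constructive_indefinite_description.
  have [r [xsr Nr]] : exists r, ann_seq xs r /\ ~ ann (@fullS M) r.
    apply: not_subS => H; apply: Hn; exists xs => r.
    by split; [apply: ann_sub_ann_seq|apply: H].
  by have [m [_ mr]] := not_subS Nr; exists m, r.
pose X n := iter n (fun xs => sval (next xs) :: xs) [::].
have [o Ho] := devlt_exists R_acc (right_ideal_zero R).
have R_nz : ~ subS (@fullS R) (@zeroS R).
  by move=> H; apply: (negP (oner_neq0 R)); apply/eqP; apply: (H 1).
have Hc : dchain (@right_ideal R) (@zeroS R) (@fullS R) (fun n => ann_seq (X n)).
  move=> i; split; first exact: right_ideal_ann_seq.
  split; first by move=> _ ->; apply: right_ideal0; apply: right_ideal_ann_seq.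
  by split=> // r /ann_seq_cons [].
have [k [o' [Hk No']]] := dchain_small_factor Ho R_nz Hc.
apply/No'/dim_R_le_M.
have [r [Xr xr]] := svalP (next (X k)).
apply: (@devlt_critical _ _ (ract_image (sval (next (X k))) (ann_seq (X k)))) => //.
- split; first by apply: submod_ract_image; apply: right_ideal_ann_seq.
  by exists (ract (sval (next (X k))) r); split=> //; exists r.
- apply: devlt_ract_image; first exact: right_ideal_ann_seq.
  by apply: devlt_subinterval Hk _ _ => // s /ann_seq_cons [].
Qed.

Lemma kdim_lt_ract_image_quotient (x : M) (E V : R -> Prop) :
  right_ideal E -> right_ideal V -> subS E V ->
  ~ subS E (ann_elt x) -> kdim_lt_M (addS E (meetS V (ann_elt x))) V.
Proof.
move=> RE RV EV Ex; have [e [Ee xe]] := not_subS Ex.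
have Nz : nonzero_submod (ract_image x E).
  split; first exact: submod_ract_image.
  by exists (ract x e); split=> //; exists e.
have [oc [Hc Nc]] := M_critical Nz.
exists oc; split=> //; apply: devlt_ract_image_quotient => //.
exact: devlt_subinterval Hc _ _.
Qed.

Lemma kdim_lt_of_essential (xs : seq M) (A V E : R -> Prop) : (exists m : M, m <> 0) ->
  right_ideal V -> right_ideal E -> subS E V ->
  eqS A (meetS V (ann_seq xs)) -> subS A E -> essential_in A V E -> kdim_lt_M E V.
Proof.
move=> M_nz; have RL := right_ideal_lattice R.
have [n] := ubnP (size xs); elim: n xs A V E => // n IH xs A V E /ltnSE size_xs.
move=> RV RE EV A_eq AE essE.
have AV : subS A V by move=> r /A_eq [].
case: (classic (subS V A)) => [VA|VA].
  exists OZ; split=> [r /VA /AE //|H0].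
  by have [m m0] := M_nz; apply: m0; apply: (H0 m).
have [e [[Ve Ee] Ae]] := not_subS (essE V RV AV (@subS_refl _ V) VA).
have [x [xsx xe]] : exists x, x \in xs /\ ract x e <> 0.
  apply: NNPP => H; apply/Ae/A_eq; split=> // y xsy.
  by apply: NNPP => ye; apply: H; exists y.
pose W := meetS V (ann_elt x).
have RW : right_ideal W by apply: right_ideal_meet => //; apply: right_ideal_ann_elt.
have small_W : kdim_lt_M (meetS E W) W.
  apply: (IH (rem x xs) A) => //.
  - by move: size_xs; rewrite (perm_size (perm_to_rem xsx)).
  - exact: right_ideal_meet.
  - by move=> r [].
  - move=> r; have := A_eq r; have := ann_seq_rem r xsx.
    by rewrite /W /meetS /ann_elt; tauto.
  - move=> r Ar; have [Vr /(ann_seq_rem r xsx) [xr _]] := (A_eq r).1 Ar.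
    by split; [apply: AE|split].
  - move=> K RK AK KW KA KEWA; apply: (essE K RK AK (fun r Kr => (KW r Kr).1) KA).
    by move=> r [Kr Er]; apply: KEWA; split=> //; split=> //; apply: KW.
have small_EW : kdim_lt_M E (addS E W).
  have [o [Ho No]] := small_W.
  by exists o; split=> //; apply: devlt_add_second_iso.
have small_V : kdim_lt_M (addS E W) V.
  by apply: kdim_lt_ract_image_quotient => // Ex; apply/xe/Ex.
apply: (kdim_lt_comb RL RE _ RV _ _ small_EW small_V).
- exact: right_ideal_add.
- exact: (addS_l RL).
- by apply: (addS_lub RL) => // r [].
Qed.

End CriticalModule.

Section AnnihilatorsInQuotient.
Variables (R : nzRingType) (I : R -> Prop).
Hypothesis I_right : right_ideal I.
Implicit Types N K : R -> Prop.

Definition max_ann_quot N := nz_right_ideal_over I N /\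
  forall N', nz_right_ideal_over I N' -> subS N' N -> eqS (ann_quot I N') (ann_quot I N).

Lemma right_ideal_ann_quot N : right_ideal (ann_quot I N).
Proof.
split; first split.
- by move=> n _; rewrite mulr0; apply: right_ideal0.
- by move=> a b Na Nb n Nn; rewrite mulrBr; apply: right_idealB; auto.
- by move=> a r Na n Nn; rewrite mulrA; apply: right_idealM; auto.
Qed.

Lemma ideal_ann_quot N : right_ideal N -> ideal (ann_quot I N).
Proof.
move=> RN; split; first exact: right_ideal_ann_quot.
have [[Q0 QB] _] := right_ideal_ann_quot N.
by split=> // a r Na n Nn; rewrite mulrA; apply: Na; apply: right_idealM.
Qed.

Lemma exists_max_ann_quot K : ascending_chain_condition (@right_ideal R) ->
  nz_right_ideal_over I K -> exists N, max_ann_quot N /\ subS N K.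
Proof.
move=> acc KI.
pose P q := right_ideal q /\
  exists N, [/\ nz_right_ideal_over I N, subS N K & eqS (ann_quot I N) q].
have PK : P (ann_quot I K).
  by split; [apply: right_ideal_ann_quot|exists K; split].
have [q [[_ [N [NI NK Nq]]] qmax]] := acc_maximal acc (fun q (Pq : P q) => Pq.1)
  (ex_intro _ _ PK).
exists N; split=> //; split=> // N' N'I N'N r.
split=> [N'r|Nr n N'n]; last exact: Nr n (N'N n N'n).
apply/Nq; apply: (qmax (ann_quot I N')) => //.
- split; first exact: right_ideal_ann_quot.
  by exists N'; split=> // z /N'N /NK.
- by move=> z /Nq Nz n N'n; apply: Nz; apply: N'N.
Qed.

Lemma prime_max_ann_quot N : max_ann_quot N -> prime_ideal (ann_quot I N).
Proof.
move=> [[RN [IN NI]] Nmax].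
split; first exact: ideal_ann_quot.
split=> [Q1|A B [[_ AM] _] _ AB].
  by apply: NI => n Nn; rewrite -[n]mulr1; apply: Q1.
case: (classic (subS A (ann_quot I N))) => [|AQ]; [by left|right].
have [a [Aa aQ]] := not_subS AQ.
have [n [Nn naI]] := not_subS aQ.
pose N' z := exists r i, I i /\ z = n * a * r + i.
have RN' : right_ideal N'.
  split; first split.
  - by exists 0, 0; rewrite mulr0 addr0; split=> //; apply: right_ideal0.
  - move=> _ _ [r [i [Ii ->]]] [r' [i' [Ii' ->]]].
    exists (r - r'), (i - i'); rewrite mulrBr opprD addrACA.
    by split=> //; apply: right_idealB.
  - move=> _ s [r [i [Ii ->]]]; exists (r * s), (i * s).
    by rewrite mulrDl mulrA; split=> //; apply: right_idealM.
have N'I : nz_right_ideal_over I N'.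
  split=> //; split=> [i Ii|N'I]; first by exists 0, i; rewrite mulr0 add0r.
  apply: naI; rewrite -[n * a]addr0 -[n * a]mulr1; apply: N'I.
  by exists 1, 0; split=> //; apply: right_ideal0.
have N'N : subS N' N.
  move=> _ [r [i [Ii ->]]]; apply: (subD (right_ideal_lattice R)) => //; last exact: IN.
  by rewrite -mulrA; apply: right_idealM.
move=> b Bb; apply/(Nmax N' N'I N'N) => _ [r [i [Ii ->]]].
rewrite mulrDl; apply: (subD (right_ideal_lattice R)) => //; last exact: right_idealM.
have -> : n * a * r * b = n * (a * r * b) by rewrite !mulrA.
by apply: (AB (a * r) b) => //; apply: AM.
Qed.

End AnnihilatorsInQuotient.

Section Proposition.
Variables (R : nzRingType) (p : R -> Prop) (M : lmodType R^c).
Hypothesis noeth : noetherian R.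
Hypothesis p_prime : prime_ideal p.
Hypothesis dim_p : kdim_eq (@right_ideal R) p (@fullS R) (@right_ideal R) (@zeroS R) (@fullS R).
Hypothesis M_critical : critical M.
Hypothesis dim_M : kdim_eq (@submod R M) (@zeroM R M) (@fullS M)
                           (@right_ideal R) (@zeroS R) (@fullS R).
Hypothesis ass_M : forall q, assoc_prime M q <-> eqS q p.

Local Notation annM := (ann (@fullS M)).

Lemma M_nonzero : exists m : M, m <> 0.
Proof. by have [_ [N [[_ [m [_ m0]]] _]]] := (ass_M p).2 (fun _ => iff_refl _); exists m. Qed.

Lemma ann_sub_p : subS annM p.
Proof.
have [_ [N [_ [Np _]]]] := (ass_M p).2 (fun _ => iff_refl _).
by move=> r Mr; apply/Np => m _; apply: Mr.
Qed.

Lemma kdim_eq_quot_ann :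
  kdim_eq (@right_ideal R) annM (@fullS R) (@right_ideal R) (@zeroS R) (@fullS R).
Proof.
have [RI _] := ann_ideal (submod_full M).
split=> o H; first by apply: devlt_subinterval H _ _ => // _ ->; apply: right_ideal0.
by apply: dim_p.2; apply: devlt_subinterval H ann_sub_p _.
Qed.

Lemma ann_eq_ann_seq_M : exists xs : seq M, eqS annM (ann_seq xs).
Proof. exact: ann_eq_ann_seq M_critical noeth.1 dim_M.2. Qed.

Lemma right_large_quot_ann : right_large_quot annM.
Proof.
move=> J [RJ [IJ essJ]]; have [xs I_xs] := ann_eq_ann_seq_M.
have I_eq : eqS annM (meetS (@fullS R) (ann_seq xs)).
  by move=> r; split=> [/I_xs|[_ /I_xs]].
have [o [Ho No]] := kdim_lt_of_essential M_critical M_nonzero (right_ideal_full R) RJ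
  (fun _ _ => I) I_eq IJ (fun K RK IK _ KI => essJ K (conj RK (conj IK KI))).
by exists o; split=> // /kdim_eq_quot_ann.2 /dim_M.1.
Qed.

Lemma right_krull_homogeneous_quot_ann : right_krull_homogeneous_quot annM.
Proof.
move=> K [RK [IK KI]]; split=> o H.
  by apply: devlt_subinterval H _ _.
have [k [Kk kI]] := not_subS KI.
have [m [_ mk]] := not_subS kI.
have Nz : nonzero_submod (ract_image m K).
  by split; [apply: submod_ract_image|exists (ract m k); split=> //; exists k].
apply/kdim_eq_quot_ann.1/dim_M.2/(devlt_critical M_critical Nz)/devlt_ract_image => //.
by apply: devlt_subinterval H _ _ => // r Ir; split; [apply: IK|apply: Ir].
Qed.

Lemma max_ann_quot_eq_p N : max_ann_quot annM N -> eqS (ann_quot annM N) p.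
Proof.
move=> maxN; have [xs I_xs] := ann_eq_ann_seq_M.
apply/ass_M/(assoc_prime_of_ann_quot I_xs maxN.1).
  by apply: prime_max_ann_quot => //; apply: (ann_ideal (submod_full M)).1.
exact: maxN.2.
Qed.

Lemma full_nz_over_ann : nz_right_ideal_over annM (@fullS R).
Proof.
split; first exact: right_ideal_full.
by split=> // H; case: p_prime => _ [p1 _]; apply/p1/ann_sub_p/H.
Qed.

Lemma assoc_quot_ann q : assoc_quot annM q <-> eqS q p.
Proof.
have RI := (ann_ideal (submod_full M)).1.
split=> [[q_prime [_ [N [NI [_ Nmax]]]]]|qp].
  have [xs I_xs] := ann_eq_ann_seq_M.
  exact/ass_M/(assoc_prime_of_ann_quot I_xs NI q_prime Nmax).
have -> : q = p.
  by apply: functional_extensionality => r; apply: propositional_extensionality.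
have [N [maxN _]] := exists_max_ann_quot RI noeth.1 full_nz_over_ann.
split=> //; split; first exact: ann_sub_p.
exists N; split; first exact: maxN.1.
split; first exact: max_ann_quot_eq_p.
move=> N' N'I N'N r.
exact: iff_trans (maxN.2 N' N'I N'N r) (max_ann_quot_eq_p maxN r).
Qed.

Lemma p_not_essential_over_ann : ~ essential_over annM p.
Proof.
by move=> /right_large_quot_ann [o [Hp No]]; apply/No/kdim_eq_quot_ann.1/dim_p.2.
Qed.

Lemma exists_ideal_above_ann :
  exists J, ideal J /\ ~ eqS J p /\ subS annM J /\ ~ subS J annM /\
    (forall j x, J j -> p x -> annM (j * x)) /\
    kdim_lt (@right_ideal R) J (@fullS R) (@right_ideal R) (@zeroS R) (@fullS R).
Proof.
have [RI LI] := ann_ideal (submod_full M).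
have [[_ [_ p_left]] _] := p_prime.
pose J r := forall x, p x -> annM (r * x).
have J_ideal : ideal J.
  have J_group : addsubgrp J.
    split=> [x _|a b Ja Jb x px]; first by rewrite mul0r; apply: right_ideal0 RI.
    by rewrite mulrBl; apply: right_idealB RI (Ja x px) (Jb x px).
  split; split=> // a r Ja x px; rewrite -mulrA; last by apply: LI.2; apply: Ja.
  by apply: Ja; apply: p_left.
have IJ : subS annM J by move=> r Ir x _; apply: right_idealM RI Ir.
have essJ : essential_over annM J.
  split; first exact: J_ideal.1.
  split=> // K KI KJI.
  have [N [maxN NK]] := exists_max_ann_quot RI noeth.1 KI.
  have [[_ [_ NI]] _] := maxN.
  apply: NI => n Nn; apply: KJI; split; first exact: NK.
  by move=> x px; apply: ((max_ann_quot_eq_p maxN x).2 px).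
have [o [HJ No]] := right_large_quot_ann essJ.
exists J; split=> //; split.
  move=> Jp; apply/No/kdim_eq_quot_ann.1/dim_p.2.
  by apply: devlt_subinterval HJ _ _ => // r /Jp.
split=> //; split; first by move=> JI; apply/No/(devlt_subinterval HJ JI).
split; first by move=> j x Jj; apply: Jj.
by exists o; split=> // H0; apply/No/(kdim_eq_quot_ann.1 o H0).
Qed.

End Proposition.

Theorem proposition2p6 (R : nzRingType) (p : R -> Prop) (M : lmodType R^c) :
  noetherian R ->
  prime_ideal p ->
  kdim_eq (@right_ideal R) p (@fullS R) (@right_ideal R) (@zeroS R) (@fullS R) ->
  fin_gen M ->
  critical M ->
  kdim_eq (@submod R M) (@zeroM R M) (@fullS M)
          (@right_ideal R) (@zeroS R) (@fullS R) ->
  (forall q, assoc_prime M q <-> eqS q p) ->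
  let I := ann (@fullS M) in
  (* (i) *)
  subS I p /\
  (* (ii) *)
  (right_krull_homogeneous_quot I /\
   kdim_eq (@right_ideal R) I (@fullS R) (@right_ideal R) (@zeroS R) (@fullS R)) /\
  (* (iii) *)
  ((forall q, assoc_quot I q <-> eqS q p) /\
   ~ essential_over I p /\
   right_large_quot I) /\
  (* (iv) *)
  (eqS I p \/
   exists J, ideal J /\ ~ eqS J p /\ subS I J /\ ~ subS J I /\
     (forall j x, J j -> p x -> I (j * x)) /\
     kdim_lt (@right_ideal R) J (@fullS R) (@right_ideal R) (@zeroS R) (@fullS R)).
Proof.
move=> noeth p_prime dim_p _ crit dim_M ass_M I.
split; first exact: ann_sub_p ass_M.
split.
  split; first exact: right_krull_homogeneous_quot_ann dim_p crit dim_M ass_M.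
  exact: kdim_eq_quot_ann dim_p ass_M.
split.
  split; first exact: assoc_quot_ann noeth p_prime crit dim_M ass_M.
  split; first exact: p_not_essential_over_ann noeth dim_p crit dim_M ass_M.
  exact: right_large_quot_ann noeth dim_p crit dim_M ass_M.
by right; apply: exists_ideal_above_ann noeth p_prime dim_p crit dim_M ass_M.
Qed.
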